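(* Fix a half-integer $j\ge \tfrac12$ and a real number $l\in(0,1)$, and let $W_{j,l}$ be the effective Bianchi IX potential defined in the context, viewed as a function of $(q^0,q^+,q^-)$. Let $q^0_1\in\mathbb{R}$ and let $(q^+(q^0),q^-(q^0),\pi_+(q^0),\pi_-(q^0))$ be a solution, defined for all $q^0\le q^0_1$, of the internal-time equations of motion \[ \frac{dq^\pm}{dq^0}=\frac{\pi_\pm}{2\sqrt{h}},\qquad \frac{d\pi_\pm}{dq^0}=-\frac{1}{\sqrt{h}}\frac{\partial W_{j,l}}{\partial q^\pm},\qquad h:=\tfrac12(\pi_+^2+\pi_-^2)+2W_{j,l}(q^0,q^+,q^-), \] with $h>0$ along the solution. Then $R(q^0):=\sqrt{(q^+(q^0))^2+(q^-(q^0))^2}$ does not remain bounded as $q^0\to-\infty$; i.e., there is no $q^0_2\le q^0_1$ such that $R$ is bounded on $(-\infty,q^0_2]$.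
   Context: Effective potential. For $0<l<1$ define, for $q>0$, \[ F_l(q)=\Big(\tfrac{2l(l+1)(l+2)}{3}\Big)^{\frac{1}{l-1}}\Big[(l+1)\{(q+1)^{l+2}-|q-1|^{l+2}\}-(l+2)\,q\,\{(q+1)^{l+1}-\mathrm{sgn}(q-1)|q-1|^{l+1}\}\Big]^{\frac{1}{1-l}} . \] (It satisfies $F_l(q)\to q^{-1}$ behaviour for $q\gg1$ and $F_l(q)\approx (3q/(l+1))^{1/(1-l)}$ for $0<q\ll1$.) For $\mu=(\mu_1,\mu_2,\mu_3)$ with all $\mu_I>0$ define, for $\{I,J,K\}=\{1,2,3\}$, \[ \Gamma_I=\tfrac12\big(\mu_K F_l(\mu_J)+\mu_J F_l(\mu_K)-\mu_J\mu_K F_l(\mu_I)^2\big), \] and \[ W_{j,l}(\mu)=8j^2\big[\mu_1\mu_2(\Gamma_1\Gamma_2-\Gamma_3)+\mu_2\mu_3(\Gamma_2\Gamma_3-\Gamma_1)+\mu_3\mu_1(\Gamma_3\Gamma_1-\Gamma_2)\big]. \] Variables: with $Q:=e^{\frac{2}{\sqrt3}q^0}/(2j)$ (so $q^0=\tfrac1{\sqrt3}\ln(\text{volume})$ is the internal time, decreasing volume means $q^0$ decreasing), \[ \mu_1=Q\,e^{\frac{4}{\sqrt6}q^+},\quad \mu_2=Q\,e^{-\frac{2}{\sqrt6}q^++\sqrt2\,q^-},\quad \mu_3=Q\,e^{-\frac{2}{\sqrt6}q^+-\sqrt2\,q^-}, \] and $W_{j,l}(q^0,q^+,q^-)$ denotes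 $W_{j,l}$ evaluated at these $\mu_I$. The internal-time Hamiltonian is $\mathcal H=\sqrt h$, with $(q^\pm,\pi_\pm)$ canonically conjugate. *)

From Stdlib Require Import Reals.
From Coquelicot Require Import Coquelicot.
Open Scope R_scope.

(* real power x^a for a > 0, with the convention 0^a = 0 (and x^a = 0 for x <= 0,
   only ever used with x >= 0 here) *)
Definition rpow (x a : R) : R := if Rlt_dec 0 x then Rpower x a else 0.

Definition sgn (x : R) : R :=
  if Rlt_dec 0 x then 1 else if Rlt_dec x 0 then -1 else 0.

Definition F (l q : R) : R :=
  rpow (2 * l * (l + 1) * (l + 2) / 3) (1 / (l - 1)) *
  rpow ((l + 1) * (rpow (q + 1) (l + 2) - rpow (Rabs (q - 1)) (l + 2))
        - (l + 2) * q * (rpow (q + 1) (l + 1) - sgn (q - 1) * rpow (Rabs (q - 1)) (l + 1)))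
       (1 / (1 - l)).

(* Gamma_I with {I,J,K} : Gamma l mI mJ mK *)
Definition Gam (l mI mJ mK : R) : R :=
  / 2 * (mK * F l mJ + mJ * F l mK - mJ * mK * (F l mI) ^ 2).

Definition Wmu (j l m1 m2 m3 : R) : R :=
  let G1 := Gam l m1 m2 m3 in
  let G2 := Gam l m2 m3 m1 in
  let G3 := Gam l m3 m1 m2 in
  8 * j ^ 2 * (m1 * m2 * (G1 * G2 - G3) + m2 * m3 * (G2 * G3 - G1)
               + m3 * m1 * (G3 * G1 - G2)).

Definition W (j l q0 qp qm : R) : R :=
  let Q := exp (2 / sqrt 3 * q0) / (2 * j) in
  Wmu j l (Q * exp (4 / sqrt 6 * qp))
          (Q * exp (- (2 / sqrt 6) * qp + sqrt 2 * qm))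
          (Q * exp (- (2 / sqrt 6) * qp - sqrt 2 * qm)).

From Stdlib Require Import Reals Lra Psatz.
From Coquelicot Require Import Coquelicot.
Open Scope R_scope.

(* Near the singularity, with (q^+, q^-) confined to a bounded set, the three mu_I are
   comparable to Q -> 0, while F_l (mu) ~ c mu^(1/(1-l)) is much smaller than mu.  Writing
   mu = Q y and F (mu) = f z, W becomes 8 j^2 Q^3 f times a polynomial - Wlead (y, z) + O (Q f)
   whose leading part is negative and homogeneous of degree 3 in y.  Hence, for q^0 small
   enough, W < 0, W decreases when Q grows, and the q^+- gradient of W is O (Q).
   Along the flow dh/dq^0 is the explicit q^0-derivative of W, so h grows as q^0 decreases.
   Then |pi|^2 >= 2 h is bounded below, while pi moves by at most O (Q / sqrt h), which is
   integrable: pi stays close to a fixed nonzero pi*, and pi* . q has derivative bounded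
   below, so q cannot stay bounded as q^0 -> -oo. *)

Lemma MVT_le (f df : R -> R) a b : a <= b ->
  (forall x, a <= x <= b -> is_derive f x (df x)) ->
  exists c, a <= c <= b /\ f b - f a = df c * (b - a).
Proof.
  intros Hab Hd.
  assert (Hmin : Rmin a b = a) by (apply Rmin_left; lra).
  assert (Hmax : Rmax a b = b) by (apply Rmax_right; lra).
  destruct (MVT_gen f a b df) as [c Hc]; cbv zeta in *; rewrite ?Hmin, ?Hmax in *.
  - intros x Hx. apply Hd. lra.
  - intros x Hx. apply derivable_continuous_pt. exists (df x).
    apply is_derive_Reals, Hd. lra.
  - exists c. exact Hc.
Qed.

Lemma derive_nonpos_antitone (f df : R -> R) a b : a <= b ->
  (forall x, a <= x <= b -> is_derive f x (df x)) ->
  (forall x, a <= x <= b -> df x <= 0) -> f b <= f a.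
Proof.
  intros Hab Hd Hn. destruct (MVT_le f df a b Hab Hd) as [c [Hc E]].
  pose proof (Hn c Hc). nra.
Qed.

Lemma derive_bounds_increment (f df : R -> R) a b lo hi : a <= b ->
  (forall x, a <= x <= b -> is_derive f x (df x)) ->
  (forall x, a <= x <= b -> lo <= df x <= hi) ->
  lo * (b - a) <= f b - f a <= hi * (b - a).
Proof.
  intros Hab Hd Hb. destruct (MVT_le f df a b Hab Hd) as [c [Hc ->]].
  destruct (Hb c Hc). split; nra.
Qed.

Lemma increment_le_of_exp_derive_bound (f df : R -> R) a b c beta :
  a <= b -> 0 < beta ->
  (forall x, a <= x <= b -> is_derive f x (df x)) ->
  (forall x, a <= x <= b -> Rabs (df x) <= c * exp (beta * x)) ->
  Rabs (f a - f b) <= c / beta * exp (beta * b).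
Proof.
  intros Hab Hbeta Hd Hbd.
  set (E x := c / beta * exp (beta * x)). set (dE x := c * exp (beta * x)).
  assert (DE : forall x, is_derive E x (dE x)).
  { intros x. unfold E, dE. auto_derive; [exact I|]. field. lra. }
  assert (Hc : 0 <= c).
  { pose proof (Hbd a ltac:(lra)). pose proof (Rabs_pos (df a)).
    pose proof (exp_pos (beta * a)). nra. }
  assert (Hup : f b - E b <= f a - E a).
  { apply (derive_nonpos_antitone (fun x => f x - E x) (fun x => df x - dE x) a b Hab).
    - intros x Hx. apply (is_derive_minus f E); auto.
    - intros x Hx. pose proof (Hbd x Hx). pose proof (Rle_abs (df x)). unfold dE. lra. }
  assert (Hlo : - f b - E b <= - f a - E a).
  { apply (derive_nonpos_antitone (fun x => - f x - E x) (fun x => - df x - dE x) a b Hab).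
    - intros x Hx. apply (is_derive_minus (fun x => - f x) E); auto.
      apply (is_derive_opp f). auto.
    - intros x Hx. pose proof (Hbd x Hx). pose proof (Rle_abs (- df x)).
      rewrite Rabs_Ropp in *. unfold dE. lra. }
  assert (0 <= E a).
  { unfold E. apply Rmult_le_pos; [apply Rdiv_le_0_compat|left; apply exp_pos]; lra. }
  apply Rabs_le. fold (E b). lra.
Qed.

Lemma exp_monotone a b : a <= b -> exp a <= exp b.
Proof. intros [Hab|<-]; [left; apply exp_increasing|]; lra. Qed.

Lemma exp_eventually_small a beta eps T : 0 < beta -> 0 < eps ->
  exists s, s <= T /\ forall t, t <= s -> a * exp (beta * t) <= eps.
Proof.
  intros Hb He. set (c := eps / (Rabs a + 1)). pose proof (Rabs_pos a).
  assert (Hc : 0 < c) by (unfold c; apply Rdiv_lt_0_compat; lra).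
  exists (Rmin T (ln c / beta)). split; [apply Rmin_l|]. intros t Ht.
  assert (E : exp (beta * t) <= c).
  { rewrite <- (exp_ln c) by lra. apply exp_monotone.
    pose proof (Rmin_r T (ln c / beta)) as Hm.
    apply Rmult_le_compat_l with (r := beta) in Ht; [|lra].
    apply Rmult_le_compat_l with (r := beta) in Hm; [|lra].
    replace (beta * (ln c / beta)) with (ln c) in Hm by (field; lra). lra. }
  pose proof (exp_pos (beta * t)).
  apply Rle_trans with ((Rabs a + 1) * c); [|right; unfold c; field; lra].
  apply Rle_trans with (Rabs a * exp (beta * t)).
  - apply Rmult_le_compat_r; [lra|apply Rle_abs].
  - apply Rmult_le_compat; lra.
Qed.

(** * The potential as a polynomial in rescaled variables *)

(* With mu_I = Q y_I and F (mu_I) = f z_I one has Gam_I = Q f gam_I (Q f) and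
   Wmu = 8 j^2 Q^3 f Wpoly (Q f) y z (Wmu_unscale); the d-versions are directional
   derivatives in the direction (dy, dz), and Wpoly e = - Wlead + e Wrest. *)
Definition gam (e yJ yK zI zJ zK : R) : R :=
  / 2 * (yK * zJ + yJ * zK) - e * (/ 2 * yJ * yK * zI ^ 2).

Definition dgam (e yJ yK zI zJ zK dyJ dyK dzI dzJ dzK : R) : R :=
  / 2 * (dyK * zJ + yK * dzJ + dyJ * zK + yJ * dzK)
  - e * (/ 2 * (dyJ * yK * zI ^ 2 + yJ * dyK * zI ^ 2 + yJ * yK * (2 * zI * dzI))).

Definition Wpoly (e y1 y2 y3 z1 z2 z3 : R) : R :=
  let G1 := gam e y2 y3 z1 z2 z3 in
  let G2 := gam e y3 y1 z2 z3 z1 in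
  let G3 := gam e y1 y2 z3 z1 z2 in
  y1 * y2 * (e * (G1 * G2) - G3) + y2 * y3 * (e * (G2 * G3) - G1)
  + y3 * y1 * (e * (G3 * G1) - G2).

Definition dWpoly (e y1 y2 y3 z1 z2 z3 dy1 dy2 dy3 dz1 dz2 dz3 : R) : R :=
  let G1 := gam e y2 y3 z1 z2 z3 in
  let G2 := gam e y3 y1 z2 z3 z1 in
  let G3 := gam e y1 y2 z3 z1 z2 in
  let D1 := dgam e y2 y3 z1 z2 z3 dy2 dy3 dz1 dz2 dz3 in
  let D2 := dgam e y3 y1 z2 z3 z1 dy3 dy1 dz2 dz3 dz1 in
  let D3 := dgam e y1 y2 z3 z1 z2 dy1 dy2 dz3 dz1 dz2 in
  (dy1 * y2 + y1 * dy2) * (e * (G1 * G2) - G3) + y1 * y2 * (e * (D1 * G2 + G1 * D2) - D3)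
  + (dy2 * y3 + y2 * dy3) * (e * (G2 * G3) - G1) + y2 * y3 * (e * (D2 * G3 + G2 * D3) - D1)
  + (dy3 * y1 + y3 * dy1) * (e * (G3 * G1) - G2) + y3 * y1 * (e * (D3 * G1 + G3 * D1) - D2).

Definition Wlead (y1 y2 y3 z1 z2 z3 : R) : R :=
  y1 * y2 * (/ 2 * (y2 * z1 + y1 * z2)) + y2 * y3 * (/ 2 * (y3 * z2 + y2 * z3))
  + y3 * y1 * (/ 2 * (y1 * z3 + y3 * z1)).

Definition dWlead (y1 y2 y3 z1 z2 z3 dy1 dy2 dy3 dz1 dz2 dz3 : R) : R :=
  (dy1 * y2 + y1 * dy2) * (/ 2 * (y2 * z1 + y1 * z2))
  + y1 * y2 * (/ 2 * (dy2 * z1 + y2 * dz1 + dy1 * z2 + y1 * dz2))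
  + (dy2 * y3 + y2 * dy3) * (/ 2 * (y3 * z2 + y2 * z3))
  + y2 * y3 * (/ 2 * (dy3 * z2 + y3 * dz2 + dy2 * z3 + y2 * dz3))
  + (dy3 * y1 + y3 * dy1) * (/ 2 * (y1 * z3 + y3 * z1))
  + y3 * y1 * (/ 2 * (dy1 * z3 + y1 * dz3 + dy3 * z1 + y3 * dz1)).

Definition Wrest (e y1 y2 y3 z1 z2 z3 : R) : R :=
  let G1 := gam e y2 y3 z1 z2 z3 in
  let G2 := gam e y3 y1 z2 z3 z1 in
  let G3 := gam e y1 y2 z3 z1 z2 in
  y1 * y2 * (G1 * G2 + / 2 * y1 * y2 * z3 ^ 2) + y2 * y3 * (G2 * G3 + / 2 * y2 * y3 * z1 ^ 2)
  + y3 * y1 * (G3 * G1 + / 2 * y3 * y1 * z2 ^ 2).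

Definition dWrest (e y1 y2 y3 z1 z2 z3 dy1 dy2 dy3 dz1 dz2 dz3 : R) : R :=
  let G1 := gam e y2 y3 z1 z2 z3 in
  let G2 := gam e y3 y1 z2 z3 z1 in
  let G3 := gam e y1 y2 z3 z1 z2 in
  let D1 := dgam e y2 y3 z1 z2 z3 dy2 dy3 dz1 dz2 dz3 in
  let D2 := dgam e y3 y1 z2 z3 z1 dy3 dy1 dz2 dz3 dz1 in
  let D3 := dgam e y1 y2 z3 z1 z2 dy1 dy2 dz3 dz1 dz2 in
  (dy1 * y2 + y1 * dy2) * (G1 * G2 + / 2 * y1 * y2 * z3 ^ 2)
  + y1 * y2 * (D1 * G2 + G1 * D2
               + / 2 * ((dy1 * y2 + y1 * dy2) * z3 ^ 2 + y1 * y2 * (2 * z3 * dz3)))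
  + (dy2 * y3 + y2 * dy3) * (G2 * G3 + / 2 * y2 * y3 * z1 ^ 2)
  + y2 * y3 * (D2 * G3 + G2 * D3
               + / 2 * ((dy2 * y3 + y2 * dy3) * z1 ^ 2 + y2 * y3 * (2 * z1 * dz1)))
  + (dy3 * y1 + y3 * dy1) * (G3 * G1 + / 2 * y3 * y1 * z2 ^ 2)
  + y3 * y1 * (D3 * G1 + G3 * D1
               + / 2 * ((dy3 * y1 + y3 * dy1) * z2 ^ 2 + y3 * y1 * (2 * z2 * dz2))).

Lemma Wpoly_split e y1 y2 y3 z1 z2 z3 :
  Wpoly e y1 y2 y3 z1 z2 z3 = - Wlead y1 y2 y3 z1 z2 z3 + e * Wrest e y1 y2 y3 z1 z2 z3.
Proof. unfold Wpoly, Wlead, Wrest, gam. ring. Qed.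

Lemma dWpoly_split e y1 y2 y3 z1 z2 z3 dy1 dy2 dy3 dz1 dz2 dz3 :
  dWpoly e y1 y2 y3 z1 z2 z3 dy1 dy2 dy3 dz1 dz2 dz3 =
  - dWlead y1 y2 y3 z1 z2 z3 dy1 dy2 dy3 dz1 dz2 dz3
  + e * dWrest e y1 y2 y3 z1 z2 z3 dy1 dy2 dy3 dz1 dz2 dz3.
Proof. unfold dWpoly, dWlead, dWrest, dgam, gam. ring. Qed.

Lemma Wpoly_unscale Q f m1 m2 m3 g1 g2 g3 : Q <> 0 -> f <> 0 ->
  Wpoly 1 m1 m2 m3 g1 g2 g3
  = Q ^ 3 * f * Wpoly (Q * f) (m1 / Q) (m2 / Q) (m3 / Q) (g1 / f) (g2 / f) (g3 / f).
Proof. intros. unfold Wpoly, gam. field. auto. Qed.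

Lemma dWpoly_unscale Q f m1 m2 m3 g1 g2 g3 dm1 dm2 dm3 dg1 dg2 dg3 : Q <> 0 -> f <> 0 ->
  dWpoly 1 m1 m2 m3 g1 g2 g3 dm1 dm2 dm3 dg1 dg2 dg3
  = Q ^ 3 * f * dWpoly (Q * f) (m1 / Q) (m2 / Q) (m3 / Q) (g1 / f) (g2 / f) (g3 / f)
                  (dm1 / Q) (dm2 / Q) (dm3 / Q) (dg1 / f) (dg2 / f) (dg3 / f).
Proof. intros. unfold dWpoly, dgam, gam. field. auto. Qed.

Lemma Rabs_plus_le a b A B : Rabs a <= A -> Rabs b <= B -> Rabs (a + b) <= A + B.
Proof. intros; eapply Rle_trans; [apply Rabs_triang|lra]. Qed.

Lemma Rabs_minus_le a b A B : Rabs a <= A -> Rabs b <= B -> Rabs (a - b) <= A + B.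
Proof. intros; eapply Rle_trans; [apply Rabs_triang|]. rewrite Rabs_Ropp; lra. Qed.

Lemma Rabs_opp_le a A : Rabs a <= A -> Rabs (- a) <= A.
Proof. rewrite Rabs_Ropp; auto. Qed.

Lemma Rabs_mult_le a b A B : Rabs a <= A -> Rabs b <= B -> Rabs (a * b) <= A * B.
Proof. intros; rewrite Rabs_mult. apply Rmult_le_compat; auto; apply Rabs_pos. Qed.

Lemma Rabs_pow_le a A n : Rabs a <= A -> Rabs (a ^ n) <= A ^ n.
Proof. intros; rewrite <- RPow_abs. apply pow_incr; split; auto; apply Rabs_pos. Qed.

(* Builds, by structural recursion on a polynomial expression, a bound on its
   absolute value from the bounds on its variables found in the context; the
   bound itself is left as an evar, so it is meant for existential goals. *)
Ltac bound_poly :=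
  first
  [ eassumption
  | eapply Rabs_plus_le; [bound_poly|bound_poly]
  | eapply Rabs_minus_le; [bound_poly|bound_poly]
  | eapply Rabs_opp_le; bound_poly
  | eapply Rabs_mult_le; [bound_poly|bound_poly]
  | eapply Rabs_pow_le; bound_poly
  | apply Rle_refl ].

Lemma Wrest_bounded K k : exists B, forall e y1 y2 y3 z1 z2 z3,
  Rabs e <= 1 -> Rabs y1 <= K -> Rabs y2 <= K -> Rabs y3 <= K ->
  Rabs z1 <= k -> Rabs z2 <= k -> Rabs z3 <= k ->
  Rabs (Wrest e y1 y2 y3 z1 z2 z3) <= B.
Proof. eexists. intros. unfold Wrest, gam. bound_poly. Qed.

Lemma dWrest_bounded K k Kdy Kdz : exists B,
  forall e y1 y2 y3 z1 z2 z3 dy1 dy2 dy3 dz1 dz2 dz3,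
  Rabs e <= 1 -> Rabs y1 <= K -> Rabs y2 <= K -> Rabs y3 <= K ->
  Rabs z1 <= k -> Rabs z2 <= k -> Rabs z3 <= k ->
  Rabs dy1 <= Kdy -> Rabs dy2 <= Kdy -> Rabs dy3 <= Kdy ->
  Rabs dz1 <= Kdz -> Rabs dz2 <= Kdz -> Rabs dz3 <= Kdz ->
  Rabs (dWrest e y1 y2 y3 z1 z2 z3 dy1 dy2 dy3 dz1 dz2 dz3) <= B.
Proof. eexists. intros. unfold dWrest, dgam, gam. bound_poly. Qed.

Lemma dWpoly_bounded K k Kdy Kdz : exists B,
  forall e y1 y2 y3 z1 z2 z3 dy1 dy2 dy3 dz1 dz2 dz3,
  Rabs e <= 1 -> Rabs y1 <= K -> Rabs y2 <= K -> Rabs y3 <= K ->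
  Rabs z1 <= k -> Rabs z2 <= k -> Rabs z3 <= k ->
  Rabs dy1 <= Kdy -> Rabs dy2 <= Kdy -> Rabs dy3 <= Kdy ->
  Rabs dz1 <= Kdz -> Rabs dz2 <= Kdz -> Rabs dz3 <= Kdz ->
  Rabs (dWpoly e y1 y2 y3 z1 z2 z3 dy1 dy2 dy3 dz1 dz2 dz3) <= B.
Proof. eexists. intros. unfold dWpoly, dgam, gam. bound_poly. Qed.

Lemma Wlead_lower_bound K y1 y2 y3 z1 z2 z3 : 0 < K ->
  / K <= y1 -> / K <= y2 -> / K <= y3 -> 1 <= z1 -> 1 <= z2 -> 1 <= z3 ->
  3 / K ^ 3 <= Wlead y1 y2 y3 z1 z2 z3.
Proof.
  intros HK H1 H2 H3 Z1 Z2 Z3.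
  assert (Hcube : forall a b c z, / K <= a -> / K <= b -> / K <= c -> 1 <= z ->
    / K ^ 3 <= a * b * c * z).
  { intros a b c z Ha Hb Hc Hz.
    assert (0 < / K) by (apply Rinv_0_lt_compat; auto).
    replace (/ K ^ 3) with (/ K * / K * / K * 1) by (field; lra).
    repeat apply Rmult_le_compat; nra. }
  pose proof (Hcube y1 y2 y2 z1). pose proof (Hcube y1 y2 y1 z2).
  pose proof (Hcube y2 y3 y3 z2). pose proof (Hcube y2 y3 y2 z3).
  pose proof (Hcube y3 y1 y1 z3). pose proof (Hcube y3 y1 y3 z1).
  unfold Wlead, Rdiv. nra.
Qed.

(* Wlead is homogeneous of degree 3 in y (Euler) and nondecreasing in z. *)
Lemma dWlead_radial_ge y1 y2 y3 z1 z2 z3 v1 v2 v3 :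
  0 <= y1 -> 0 <= y2 -> 0 <= y3 -> 0 <= v1 -> 0 <= v2 -> 0 <= v3 ->
  3 * Wlead y1 y2 y3 z1 z2 z3 <= dWlead y1 y2 y3 z1 z2 z3 y1 y2 y3 v1 v2 v3.
Proof.
  intros.
  assert (E : dWlead y1 y2 y3 z1 z2 z3 y1 y2 y3 v1 v2 v3 - 3 * Wlead y1 y2 y3 z1 z2 z3
    = / 2 * (y1 * y2 * (y2 * v1 + y1 * v2) + y2 * y3 * (y3 * v2 + y2 * v3)
             + y3 * y1 * (y1 * v3 + y3 * v1))) by (unfold dWlead, Wlead; field).
  assert (0 <= / 2 * (y1 * y2 * (y2 * v1 + y1 * v2) + y2 * y3 * (y3 * v2 + y2 * v3)
             + y3 * y1 * (y1 * v3 + y3 * v1)))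
    by (repeat (apply Rmult_le_pos || apply Rplus_le_le_0_compat); lra).
  lra.
Qed.

Lemma small_perturbation_neg a Bmax : 0 < a ->
  exists eps, 0 < eps <= 1 /\
  forall A B e, a <= A -> Rabs B <= Bmax -> 0 < e <= eps -> - A + e * B < 0.
Proof.
  intros Ha. pose proof (Rabs_pos Bmax).
  exists (Rmin 1 (a / (Rabs Bmax + 1))).
  assert (Hq : 0 < a / (Rabs Bmax + 1)) by (apply Rdiv_lt_0_compat; lra).
  split; [split; [apply Rmin_glb_lt; lra|apply Rmin_l]|].
  intros A B e HA HB He.
  pose proof (Rmin_r 1 (a / (Rabs Bmax + 1))).
  assert (e * (Rabs Bmax + 1) <= a).
  { apply Rmult_le_reg_r with (/ (Rabs Bmax + 1)); [apply Rinv_0_lt_compat; lra|].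
    rewrite Rmult_assoc, Rinv_r by lra. lra. }
  pose proof (Rle_abs B). pose proof (Rle_abs Bmax). nra.
Qed.

Lemma Wpoly_neg_small_coupling K k : 1 <= K ->
  exists eps, 0 < eps <= 1 /\ forall e y1 y2 y3 z1 z2 z3, 0 < e <= eps ->
  / K <= y1 <= K -> / K <= y2 <= K -> / K <= y3 <= K ->
  1 <= z1 <= k -> 1 <= z2 <= k -> 1 <= z3 <= k ->
  Wpoly e y1 y2 y3 z1 z2 z3 < 0.
Proof.
  intros HK. destruct (Wrest_bounded K k) as [B HB].
  destruct (small_perturbation_neg (3 / K ^ 3) B) as (eps & Heps & Hneg);
    [apply Rdiv_lt_0_compat; [|apply pow_lt]; lra|].
  exists eps. split; [exact Heps|].
  intros e y1 y2 y3 z1 z2 z3 He Y1 Y2 Y3 Z1 Z2 Z3.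
  assert (0 < / K) by (apply Rinv_0_lt_compat; lra).
  rewrite Wpoly_split. apply Hneg; [apply Wlead_lower_bound| apply HB |]; try apply Rabs_le; lra.
Qed.

Lemma dWpoly_radial_neg_small_coupling K k rho : 1 <= K ->
  exists eps, 0 < eps <= 1 /\ forall e y1 y2 y3 z1 z2 z3 v1 v2 v3, 0 < e <= eps ->
  / K <= y1 <= K -> / K <= y2 <= K -> / K <= y3 <= K ->
  1 <= z1 <= k -> 1 <= z2 <= k -> 1 <= z3 <= k ->
  0 <= v1 <= rho -> 0 <= v2 <= rho -> 0 <= v3 <= rho ->
  dWpoly e y1 y2 y3 z1 z2 z3 y1 y2 y3 v1 v2 v3 < 0.
Proof.
  intros HK. destruct (dWrest_bounded K k K rho) as [B HB].
  destruct (small_perturbation_neg (3 / K ^ 3) B) as (eps & Heps & Hneg);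
    [apply Rdiv_lt_0_compat; [|apply pow_lt]; lra|].
  exists eps. split; [exact Heps|].
  intros e y1 y2 y3 z1 z2 z3 v1 v2 v3 He Y1 Y2 Y3 Z1 Z2 Z3 V1 V2 V3.
  assert (0 < / K) by (apply Rinv_0_lt_compat; lra).
  rewrite dWpoly_split. apply Hneg; [| apply HB; apply Rabs_le; lra | lra].
  assert (3 / K ^ 3 <= Wlead y1 y2 y3 z1 z2 z3) by (apply Wlead_lower_bound; lra).
  assert (3 * Wlead y1 y2 y3 z1 z2 z3 <= dWlead y1 y2 y3 z1 z2 z3 y1 y2 y3 v1 v2 v3)
    by (apply dWlead_radial_ge; lra).
  assert (0 < 3 / K ^ 3) by (apply Rdiv_lt_0_compat; [|apply pow_lt]; lra).
  lra.
Qed.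

(** * F_l near 0 *)

Lemma Rpower_pos x a : 0 < Rpower x a.
Proof. apply exp_pos. Qed.

Lemma Rpower_1_base a : Rpower 1 a = 1.
Proof. unfold Rpower. rewrite ln_1, Rmult_0_r. apply exp_0. Qed.

Lemma Rpower_ge_1 x a : 1 <= x -> 0 <= a -> 1 <= Rpower x a.
Proof. intros. rewrite <- (Rpower_1_base a). apply Rle_Rpower_l; lra. Qed.

Lemma Rpower_le_1 x a : 0 < x <= 1 -> 0 <= a -> Rpower x a <= 1.
Proof. intros. rewrite <- (Rpower_1_base a). apply Rle_Rpower_l; lra. Qed.

Lemma Rpower_le_self x a : 1 <= x -> a <= 1 -> Rpower x a <= x.
Proof. intros. rewrite <- (Rpower_1 x) at 2 by lra. apply Rle_Rpower; auto. Qed.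

Lemma Rpower_le_sqr x a : 1 <= x -> a <= 2 -> Rpower x a <= x ^ 2.
Proof. intros. rewrite <- Rpower_pow by lra. apply Rle_Rpower; auto; simpl; lra. Qed.

Lemma is_derive_Rpower a x : 0 < x -> is_derive (fun t => Rpower t a) x (a * Rpower x (a - 1)).
Proof. intros. apply is_derive_Reals, derivable_pt_lim_power. auto. Qed.

Lemma rpow_Rpower x a : 0 < x -> rpow x a = Rpower x a.
Proof. intros. unfold rpow. destruct (Rlt_dec 0 x); [auto|lra]. Qed.

Section SmallArgument.

Variable l : R.
Hypothesis Hl : 0 < l < 1.

(* On (0, 1) the bracket in the definition of F, with sgn (q - 1) = -1. *)
Definition Fbracket (x : R) : R :=
  (l + 1) * (Rpower (x + 1) (l + 2) - Rpower (1 - x) (l + 2))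
  - (l + 2) * x * (Rpower (x + 1) (l + 1) + Rpower (1 - x) (l + 1)).

Definition dFbracket (x : R) : R :=
  (l + 2) * l * (Rpower (x + 1) (l + 1) + Rpower (1 - x) (l + 1))
  - (l + 2) * (l + 1) * x * (Rpower (x + 1) l - Rpower (1 - x) l).

Definition Fconst : R := Rpower (2 * l * (l + 1) * (l + 2) / 3) (1 / (l - 1)).
Definition Fexp : R := 1 / (1 - l).
Definition dF (x : R) : R := Fconst * (Fexp * Rpower (Fbracket x) (Fexp - 1) * dFbracket x).
Definition Fradius : R := l / (4 * (l + 1)).
Definition slope_lo : R := l * (l + 2) / 2.
Definition slope_hi : R := 5 * l * (l + 2).

Lemma Fconst_pos : 0 < Fconst.
Proof. apply Rpower_pos. Qed.

Lemma Fexp_ge_1 : 1 <= Fexp.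
Proof.
  unfold Fexp, Rdiv. rewrite Rmult_1_l, <- Rinv_1 at 1. apply Rinv_le_contravar; lra.
Qed.

Lemma Fradius_pos : 0 < Fradius.
Proof. unfold Fradius. apply Rdiv_lt_0_compat; lra. Qed.

Lemma Fradius_le : Fradius <= 1 / 8.
Proof.
  unfold Fradius. apply Rmult_le_reg_r with (4 * (l + 1)); [lra|].
  unfold Rdiv. rewrite Rmult_assoc, Rinv_l by lra. lra.
Qed.

Lemma slope_lo_pos : 0 < slope_lo.
Proof. unfold slope_lo. apply Rdiv_lt_0_compat; nra. Qed.

Lemma slope_hi_pos : 0 < slope_hi.
Proof. unfold slope_hi. nra. Qed.

Lemma Fbracket_derive x : -1 < x < 1 -> is_derive Fbracket x (dFbracket x).
Proof.
  intros Hx. unfold Fbracket, dFbracket.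
  assert (E1 : forall a, Derive (fun t => Rpower t a) (x + 1) = a * Rpower (x + 1) (a - 1))
    by (intros; apply is_derive_unique, is_derive_Rpower; lra).
  assert (E2 : forall a, Derive (fun t => Rpower t a) (1 + - x) = a * Rpower (1 - x) (a - 1))
    by (intros; apply is_derive_unique, is_derive_Rpower; lra).
  auto_derive.
  - repeat split; eexists; apply is_derive_Rpower; lra.
  - rewrite !E1, !E2.
    replace (l + 2 - 1) with (l + 1) by ring. replace (l + 1 - 1) with l by ring.
    replace (1 + - x) with (1 - x) by ring. ring.
Qed.

Lemma dFbracket_bounds x : 0 <= x <= Fradius -> slope_lo <= dFbracket x <= slope_hi.
Proof.
  intros Hx. pose proof Fradius_le.
  assert (Hxl : x * (4 * (l + 1)) <= l).
  { unfold Fradius in Hx. destruct Hx as [_ Hx].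
    apply Rmult_le_compat_r with (r := 4 * (l + 1)) in Hx; [|lra].
    unfold Rdiv in Hx. rewrite Rmult_assoc, Rinv_l in Hx by lra. lra. }
  assert (P1 : 1 <= Rpower (x + 1) (l + 1)) by (apply Rpower_ge_1; lra).
  assert (P2 : Rpower (x + 1) (l + 1) <= (x + 1) ^ 2) by (apply Rpower_le_sqr; lra).
  assert (P3 : 0 < Rpower (1 - x) (l + 1) <= 1)
    by (split; [apply Rpower_pos|apply Rpower_le_1; lra]).
  assert (S1 : 1 <= Rpower (x + 1) l <= x + 1)
    by (split; [apply Rpower_ge_1|apply Rpower_le_self]; lra).
  assert (S2 : 0 < Rpower (1 - x) l <= 1)
    by (split; [apply Rpower_pos|apply Rpower_le_1; lra]).
  set (P := Rpower (x + 1) (l + 1)) in *. set (P' := Rpower (1 - x) (l + 1)) in *.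
  set (S := Rpower (x + 1) l) in *. set (S' := Rpower (1 - x) l) in *.
  assert (HS : 0 <= (l + 2) * (l + 1) * x * (S - S') <= (l + 2) * (l + 1) * x * 2).
  { split; apply Rmult_le_compat_l || apply Rmult_le_pos; nra. }
  unfold dFbracket, slope_lo, slope_hi. fold P P' S S'. split.
  - assert ((l + 2) * l * 1 <= (l + 2) * l * (P + P')) by (apply Rmult_le_compat_l; nra).
    nra.
  - assert ((l + 2) * l * (P + P') <= (l + 2) * l * 5) by (apply Rmult_le_compat_l; nra).
    nra.
Qed.

Lemma Fbracket_bounds x : 0 <= x <= Fradius -> slope_lo * x <= Fbracket x <= slope_hi * x.
Proof.
  intros Hx. pose proof Fradius_le.
  assert (H0 : Fbracket 0 = 0).
  { unfold Fbracket. replace (0 + 1) with 1 by ring. replace (1 - 0) with 1 by ring.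
    rewrite !Rpower_1_base. ring. }
  destruct (derive_bounds_increment Fbracket dFbracket 0 x slope_lo slope_hi) as [B1 B2].
  - lra.
  - intros y Hy. apply Fbracket_derive. lra.
  - intros y Hy. apply dFbracket_bounds. lra.
  - lra.
Qed.

Lemma F_small x : 0 < x <= Fradius -> F l x = Fconst * Rpower (Fbracket x) Fexp.
Proof.
  intros Hx. pose proof Fradius_le. pose proof slope_lo_pos.
  assert (0 < Fbracket x) by (pose proof (Fbracket_bounds x ltac:(lra)); nra).
  unfold F, Fconst, Fexp.
  rewrite (rpow_Rpower (2 * l * (l + 1) * (l + 2) / 3)) by (apply Rdiv_lt_0_compat; nra).
  f_equal. rewrite <- rpow_Rpower by auto. f_equal.
  rewrite Rabs_left by lra. replace (- (x - 1)) with (1 - x) by ring.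
  unfold sgn. destruct (Rlt_dec 0 (x - 1)); [lra|]. destruct (Rlt_dec (x - 1) 0); [|lra].
  rewrite !(rpow_Rpower (x + 1)), !(rpow_Rpower (1 - x)) by lra.
  unfold Fbracket. ring.
Qed.

Lemma F_derive x : 0 < x < Fradius -> is_derive (F l) x (dF x).
Proof.
  intros Hx. pose proof Fradius_le. pose proof slope_lo_pos.
  apply is_derive_ext_loc with (f := fun t => Fconst * Rpower (Fbracket t) Fexp).
  { apply locally_interval with (a := Finite 0) (b := Finite Fradius); simpl; try lra.
    intros y H1 H2. symmetry. apply F_small. lra. }
  assert (0 < Fbracket x) by (pose proof (Fbracket_bounds x ltac:(lra)); nra).
  assert (E1 : Derive (fun t => Rpower t Fexp) (Fbracket x)
               = Fexp * Rpower (Fbracket x) (Fexp - 1))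
    by (apply is_derive_unique, is_derive_Rpower; auto).
  assert (E2 : Derive Fbracket x = dFbracket x)
    by (apply is_derive_unique, Fbracket_derive; lra).
  unfold dF. auto_derive.
  - split; [eexists; apply is_derive_Rpower; auto|].
    split; [eexists; apply Fbracket_derive; lra|exact I].
  - change (Derive (fun t => Fbracket t) x) with (Derive Fbracket x). rewrite E1, E2. ring.
Qed.

Lemma F_small_bounds x : 0 < x <= Fradius ->
  Fconst * Rpower (slope_lo * x) Fexp <= F l x <= Fconst * Rpower (slope_hi * x) Fexp /\
  0 <= x * dF x <= Fexp * (Fconst * Rpower (slope_hi * x) Fexp).
Proof.
  intros Hx. pose proof Fradius_le. pose proof slope_lo_pos. pose proof slope_hi_pos.
  pose proof Fexp_ge_1. pose proof Fconst_pos.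
  destruct (Fbracket_bounds x ltac:(lra)) as [G1 G2].
  destruct (dFbracket_bounds x ltac:(lra)) as [D1 D2].
  assert (0 < slope_lo * x) by nra.
  pose proof (Rpower_pos (Fbracket x) (Fexp - 1)).
  rewrite F_small by lra. split; [split|split].
  - apply Rmult_le_compat_l; [lra|]. apply Rle_Rpower_l; lra.
  - apply Rmult_le_compat_l; [lra|]. apply Rle_Rpower_l; lra.
  - unfold dF. apply Rmult_le_pos; [lra|]. apply Rmult_le_pos; [lra|].
    apply Rmult_le_pos; [apply Rmult_le_pos|]; lra.
  - assert (Q1 : Rpower (Fbracket x) (Fexp - 1) <= Rpower (slope_hi * x) (Fexp - 1))
      by (apply Rle_Rpower_l; lra).
    assert (Q2 : Rpower (slope_hi * x) Fexp = Rpower (slope_hi * x) (Fexp - 1) * (slope_hi * x)).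
    { rewrite <- (Rpower_1 (slope_hi * x)) at 3 by nra. rewrite <- Rpower_plus.
      f_equal; ring. }
    rewrite Q2. unfold dF.
    replace (x * (Fconst * (Fexp * Rpower (Fbracket x) (Fexp - 1) * dFbracket x)))
      with (Fconst * Fexp * x * (Rpower (Fbracket x) (Fexp - 1) * dFbracket x)) by ring.
    replace (Fexp * (Fconst * (Rpower (slope_hi * x) (Fexp - 1) * (slope_hi * x))))
      with (Fconst * Fexp * x * (Rpower (slope_hi * x) (Fexp - 1) * slope_hi)) by ring.
    apply Rmult_le_compat_l; [apply Rmult_le_pos; [apply Rmult_le_pos|]; lra|].
    apply Rmult_le_compat; lra.
Qed.

End SmallArgument.

Lemma Wmu_Wpoly j l m1 m2 m3 :
  Wmu j l m1 m2 m3 = 8 * j ^ 2 * Wpoly 1 m1 m2 m3 (F l m1) (F l m2) (F l m3).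
Proof. unfold Wmu, Wpoly, Gam, gam. ring. Qed.

(* Rate of change of Wmu when each log mu_I moves with velocity r_I. *)
Definition dWmu (j l m1 m2 m3 r1 r2 r3 : R) : R :=
  8 * j ^ 2 * dWpoly 1 m1 m2 m3 (F l m1) (F l m2) (F l m3)
    (m1 * r1) (m2 * r2) (m3 * r3)
    (dF l m1 * (m1 * r1)) (dF l m2 * (m2 * r2)) (dF l m3 * (m3 * r3)).

Lemma dWmu_linear j l m1 m2 m3 c a b a1 a2 a3 b1 b2 b3 :
  dWmu j l m1 m2 m3 (c + a1 * a + b1 * b) (c + a2 * a + b2 * b) (c + a3 * a + b3 * b)
  = c * dWmu j l m1 m2 m3 1 1 1 + a * dWmu j l m1 m2 m3 a1 a2 a3
    + b * dWmu j l m1 m2 m3 b1 b2 b3.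
Proof. unfold dWmu, dWpoly, dgam, gam. ring. Qed.

Lemma Wmu_log_derive j l (u1 u2 u3 : R -> R) (s r1 r2 r3 : R) : 0 < l < 1 ->
  is_derive u1 s (u1 s * r1) -> is_derive u2 s (u2 s * r2) -> is_derive u3 s (u3 s * r3) ->
  0 < u1 s < Fradius l -> 0 < u2 s < Fradius l -> 0 < u3 s < Fradius l ->
  is_derive (fun s => Wmu j l (u1 s) (u2 s) (u3 s)) s (dWmu j l (u1 s) (u2 s) (u3 s) r1 r2 r3).
Proof.
  intros Hl D1 D2 D3 M1 M2 M3.
  pose proof (F_derive l Hl _ M1) as F1. pose proof (F_derive l Hl _ M2) as F2.
  pose proof (F_derive l Hl _ M3) as F3.
  apply is_derive_ext
    with (f := fun s => 8 * j ^ 2 *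
      Wpoly 1 (u1 s) (u2 s) (u3 s) (F l (u1 s)) (F l (u2 s)) (F l (u3 s))).
  { intros s'. symmetry. apply Wmu_Wpoly. }
  pose proof (is_derive_unique _ _ _ D1) as E1. pose proof (is_derive_unique _ _ _ D2) as E2.
  pose proof (is_derive_unique _ _ _ D3) as E3. pose proof (is_derive_unique _ _ _ F1) as G1.
  pose proof (is_derive_unique _ _ _ F2) as G2. pose proof (is_derive_unique _ _ _ F3) as G3.
  unfold Wpoly, gam. cbv zeta. auto_derive.
  - repeat split; eexists; eassumption.
  - change (Derive (fun x => u1 x) s) with (Derive u1 s).
    change (Derive (fun x => u2 x) s) with (Derive u2 s).
    change (Derive (fun x => u3 x) s) with (Derive u3 s).
    change (Derive (fun x => F l x)) with (Derive (F l)).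
    rewrite E1, E2, E3, G1, G2, G3.
    unfold dWmu, dWpoly, dgam, gam. ring.
Qed.

Definition Qvol (j t : R) : R := exp (2 / sqrt 3 * t) / (2 * j).
Definition mu1 (j t x y : R) : R := Qvol j t * exp (4 / sqrt 6 * x).
Definition mu2 (j t x y : R) : R := Qvol j t * exp (- (2 / sqrt 6) * x + sqrt 2 * y).
Definition mu3 (j t x y : R) : R := Qvol j t * exp (- (2 / sqrt 6) * x - sqrt 2 * y).

Lemma W_mu j l t x y : W j l t x y = Wmu j l (mu1 j t x y) (mu2 j t x y) (mu3 j t x y).
Proof. reflexivity. Qed.

(* The rates are the derivatives of ln mu_I with respect to ln Q, q^+ and q^-. *)
Definition dW_logQ (j l t x y : R) : R :=
  dWmu j l (mu1 j t x y) (mu2 j t x y) (mu3 j t x y) 1 1 1.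
Definition dW_qp (j l t x y : R) : R :=
  dWmu j l (mu1 j t x y) (mu2 j t x y) (mu3 j t x y)
    (4 / sqrt 6) (- (2 / sqrt 6)) (- (2 / sqrt 6)).
Definition dW_qm (j l t x y : R) : R :=
  dWmu j l (mu1 j t x y) (mu2 j t x y) (mu3 j t x y) 0 (sqrt 2) (- sqrt 2).

Definition near_singularity (j l t x y : R) : Prop :=
  0 < mu1 j t x y < Fradius l /\ 0 < mu2 j t x y < Fradius l /\ 0 < mu3 j t x y < Fradius l.

Lemma W_derive_qp j l t x y : 0 < l < 1 -> near_singularity j l t x y ->
  is_derive (fun x : R => W j l t x y) x (dW_qp j l t x y).
Proof.
  intros Hl (M1 & M2 & M3).
  apply (Wmu_log_derive j l (fun s => mu1 j t s y) (fun s => mu2 j t s y)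
    (fun s => mu3 j t s y)); auto; unfold mu1, mu2, mu3, Rminus; auto_derive;
    first [exact I | ring].
Qed.

Lemma W_derive_qm j l t x y : 0 < l < 1 -> near_singularity j l t x y ->
  is_derive (fun y : R => W j l t x y) y (dW_qm j l t x y).
Proof.
  intros Hl (M1 & M2 & M3).
  apply (Wmu_log_derive j l (fun s => mu1 j t x s) (fun s => mu2 j t x s)
    (fun s => mu3 j t x s)); auto; unfold mu1, mu2, mu3, Rminus; auto_derive;
    first [exact I | ring].
Qed.

Lemma W_derive_along j l (qp qm : R -> R) t a b : 0 < l < 1 ->
  is_derive qp t a -> is_derive qm t b -> near_singularity j l t (qp t) (qm t) ->
  is_derive (fun s => W j l s (qp s) (qm s)) t
    (2 / sqrt 3 * dW_logQ j l t (qp t) (qm t) + a * dW_qp j l t (qp t) (qm t)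
     + b * dW_qm j l t (qp t) (qm t)).
Proof.
  intros Hl Da Db (M1 & M2 & M3).
  unfold dW_logQ, dW_qp, dW_qm. rewrite <- dWmu_linear.
  pose proof (is_derive_unique _ _ _ Da) as Ea. pose proof (is_derive_unique _ _ _ Db) as Eb.
  apply (Wmu_log_derive j l (fun s => mu1 j s (qp s) (qm s)) (fun s => mu2 j s (qp s) (qm s))
    (fun s => mu3 j s (qp s) (qm s))); auto; unfold mu1, mu2, mu3, Qvol, Rminus; auto_derive;
    try (repeat split; auto; eexists; eauto);
    change (Derive (fun x => qp x) t) with (Derive qp t);
    change (Derive (fun x => qm x) t) with (Derive qm t); rewrite ?Ea, ?Eb; unfold Rdiv; ring.
Qed.

(** * Estimates near the singularity *)

Lemma Wmu_unscale j l Q f m1 m2 m3 : Q <> 0 -> f <> 0 ->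
  Wmu j l m1 m2 m3 = 8 * j ^ 2 * (Q ^ 3 * f *
    Wpoly (Q * f) (m1 / Q) (m2 / Q) (m3 / Q) (F l m1 / f) (F l m2 / f) (F l m3 / f)).
Proof. intros. rewrite Wmu_Wpoly, (Wpoly_unscale Q f) by auto. reflexivity. Qed.

Lemma dWmu_unscale j l Q f m1 m2 m3 r1 r2 r3 : Q <> 0 -> f <> 0 ->
  dWmu j l m1 m2 m3 r1 r2 r3 = 8 * j ^ 2 * (Q ^ 3 * f *
    dWpoly (Q * f) (m1 / Q) (m2 / Q) (m3 / Q) (F l m1 / f) (F l m2 / f) (F l m3 / f)
      (m1 / Q * r1) (m2 / Q * r2) (m3 / Q * r3)
      (dF l m1 * m1 / f * r1) (dF l m2 * m2 / f * r2) (dF l m3 * m3 / f * r3)).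
Proof.
  intros. unfold dWmu. rewrite (dWpoly_unscale Q f) by auto.
  do 3 f_equal; unfold Rdiv; ring.
Qed.

(* Fscale is the lower bound of F on [Q / K, Q K] given by F_small_bounds, and
   Fratio_max bounds the ratio of the upper bound to it. *)
Definition Fscale (l K Q : R) : R := Fconst l * Rpower (slope_lo l * Q / K) (Fexp l).
Definition Fratio_max (l K : R) : R := Rpower (slope_hi l * K * K / slope_lo l) (Fexp l).

Lemma Fscale_pos l K Q : 0 < Fscale l K Q.
Proof. apply Rmult_lt_0_compat; [apply Fconst_pos|apply Rpower_pos]. Qed.

Lemma Fscale_le l K Q : 0 < l < 1 -> 1 <= K -> 0 < Q <= K / slope_lo l ->
  Fscale l K Q <= Fconst l.
Proof.
  intros Hl HK HQ. pose proof (slope_lo_pos l Hl). pose proof (Fconst_pos l).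
  unfold Fscale. rewrite <- (Rmult_1_r (Fconst l)) at 2. apply Rmult_le_compat_l; [lra|].
  apply Rpower_le_1; [|pose proof (Fexp_ge_1 l Hl); lra].
  split; [apply Rdiv_lt_0_compat; nra|].
  apply Rmult_le_reg_r with K; [lra|]. unfold Rdiv. rewrite Rmult_assoc, Rinv_l by lra.
  destruct HQ as [_ HQ]. apply Rmult_le_compat_r with (r := slope_lo l) in HQ; [|lra].
  unfold Rdiv in HQ. rewrite Rmult_assoc, Rinv_l in HQ by lra. lra.
Qed.

Lemma F_scaled_bounds l K Q m : 0 < l < 1 -> 1 <= K -> 0 < Q -> Q * K <= Fradius l ->
  Q / K <= m <= Q * K ->
  1 <= F l m / Fscale l K Q <= Fratio_max l K /\
  0 <= dF l m * m / Fscale l K Q <= Fexp l * Fratio_max l K.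
Proof.
  intros Hl HK HQ HQK Hm.
  pose proof (slope_lo_pos l Hl). pose proof (slope_hi_pos l Hl).
  pose proof (Fconst_pos l). pose proof (Fexp_ge_1 l Hl). pose proof (Fscale_pos l K Q).
  assert (HQK' : 0 < Q / K) by (apply Rdiv_lt_0_compat; lra).
  destruct (F_small_bounds l Hl m ltac:(lra)) as [[F1 F2] [F3 F4]].
  assert (Hlo : Fscale l K Q <= Fconst l * Rpower (slope_lo l * m) (Fexp l)).
  { unfold Fscale. apply Rmult_le_compat_l; [lra|]. apply Rle_Rpower_l; [lra|].
    unfold Rdiv. rewrite Rmult_assoc. split; [apply Rmult_lt_0_compat; auto|].
    apply Rmult_le_compat_l; lra. }
  assert (Hhi : Fconst l * Rpower (slope_hi l * m) (Fexp l) <= Fscale l K Q * Fratio_max l K).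
  { unfold Fscale, Fratio_max. rewrite Rmult_assoc, Rpower_mult_distr.
    2: { unfold Rdiv. rewrite Rmult_assoc. apply Rmult_lt_0_compat; auto. }
    2: { apply Rdiv_lt_0_compat; [|lra]. repeat apply Rmult_lt_0_compat; lra. }
    apply Rmult_le_compat_l; [lra|]. apply Rle_Rpower_l; [lra|].
    split; [apply Rmult_lt_0_compat; lra|].
    replace (slope_lo l * Q / K * (slope_hi l * K * K / slope_lo l))
      with (slope_hi l * (Q * K)) by (field; lra).
    apply Rmult_le_compat_l; lra. }
  assert (Hdiv : forall a b, a <= b * Fscale l K Q -> a / Fscale l K Q <= b).
  { intros a b Hab. apply Rmult_le_reg_r with (Fscale l K Q); [lra|].
    unfold Rdiv. rewrite Rmult_assoc, Rinv_l by lra. lra. }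
  assert (Hdiv' : forall a b, b * Fscale l K Q <= a -> b <= a / Fscale l K Q).
  { intros a b Hab. apply Rmult_le_reg_r with (Fscale l K Q); [lra|].
    unfold Rdiv. rewrite Rmult_assoc, Rinv_l by lra. lra. }
  repeat split.
  - apply Hdiv'. lra.
  - apply Hdiv. lra.
  - apply Hdiv'. rewrite Rmult_comm. lra.
  - apply Hdiv. rewrite (Rmult_comm (dF l m)).
    assert (Fexp l * (Fconst l * Rpower (slope_hi l * m) (Fexp l))
            <= Fexp l * (Fscale l K Q * Fratio_max l K)) by (apply Rmult_le_compat_l; lra).
    lra.
Qed.

Lemma Fratio_max_ge_1 l K : 0 < l < 1 -> 1 <= K -> 1 <= Fratio_max l K.
Proof.
  intros Hl HK. pose proof (slope_lo_pos l Hl). pose proof (Fexp_ge_1 l Hl).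
  apply Rpower_ge_1; [|lra].
  apply Rmult_le_reg_r with (slope_lo l); [lra|]. unfold Rdiv.
  rewrite Rmult_assoc, Rinv_l by lra.
  assert (slope_lo l <= slope_hi l).
  { unfold slope_lo, slope_hi. assert (0 < l * (l + 2)) by nra. lra. }
  assert (1 <= K * K) by nra. nra.
Qed.

Lemma window_ratio K Q m : 1 <= K -> 0 < Q -> Q / K <= m <= Q * K -> / K <= m / Q <= K.
Proof.
  intros HK HQ Hm. unfold Rdiv in *. split.
  - apply Rmult_le_reg_r with Q; [lra|]. rewrite Rmult_assoc, Rinv_l by lra. lra.
  - apply Rmult_le_reg_r with Q; [lra|]. rewrite Rmult_assoc, Rinv_l by lra. lra.
Qed.

Lemma small_Q_window l K eps : 0 < l < 1 -> 1 <= K -> 0 < eps ->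
  exists Q0, 0 < Q0 /\ forall Q, 0 < Q <= Q0 ->
  Q <= 1 /\ Q * K <= Fradius l / 2 /\ Fscale l K Q <= Fconst l /\ Q * Fscale l K Q <= eps.
Proof.
  intros Hl HK Heps.
  pose proof (Fradius_pos l Hl). pose proof (Fradius_le l Hl).
  pose proof (slope_lo_pos l Hl). pose proof (Fconst_pos l).
  set (a := Fradius l / (2 * K)). set (b := K / slope_lo l). set (c := eps / Fconst l).
  exists (Rmin a (Rmin b c)).
  split; [repeat apply Rmin_glb_lt; apply Rdiv_lt_0_compat; lra|].
  intros Q HQ.
  pose proof (Rmin_l a (Rmin b c)). pose proof (Rmin_r a (Rmin b c)).
  pose proof (Rmin_l b c). pose proof (Rmin_r b c).
  assert (HQK : Q * K <= Fradius l / 2).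
  { replace (Fradius l / 2) with (a * K) by (unfold a; field; lra).
    apply Rmult_le_compat_r; lra. }
  assert (Hf : Fscale l K Q <= Fconst l) by (apply Fscale_le; unfold b in *; lra).
  pose proof (Fscale_pos l K Q).
  repeat split; [nra|exact HQK|exact Hf|].
  replace eps with (c * Fconst l) by (unfold c; field; lra).
  apply Rmult_le_compat; lra.
Qed.

Lemma Rabs_mult_rate a r B : 0 <= a <= B -> Rabs r <= 2 -> Rabs (a * r) <= 2 * B.
Proof. intros. rewrite Rabs_mult, Rabs_pos_eq by lra. pose proof (Rabs_pos r). nra. Qed.

Lemma Wmu_estimates j l K : 0 < j -> 0 < l < 1 -> 1 <= K ->
  exists Q0 D, 0 < Q0 /\ forall Q m1 m2 m3, 0 < Q <= Q0 ->
  Q / K <= m1 <= Q * K -> Q / K <= m2 <= Q * K -> Q / K <= m3 <= Q * K ->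
  m1 < Fradius l /\ m2 < Fradius l /\ m3 < Fradius l /\
  Wmu j l m1 m2 m3 < 0 /\ dWmu j l m1 m2 m3 1 1 1 <= 0 /\
  (forall r1 r2 r3, Rabs r1 <= 2 -> Rabs r2 <= 2 -> Rabs r3 <= 2 ->
     Rabs (dWmu j l m1 m2 m3 r1 r2 r3) <= D * Q).
Proof.
  intros Hj Hl HK. pose proof (Fradius_pos l Hl). pose proof (Fexp_ge_1 l Hl).
  set (kap := Fratio_max l K). pose proof (Fratio_max_ge_1 l K Hl HK) as Hkap.
  destruct (Wpoly_neg_small_coupling K kap HK) as (e1 & He1 & HW).
  destruct (dWpoly_radial_neg_small_coupling K kap (Fexp l * kap) HK) as (e2 & He2 & HdW).
  destruct (dWpoly_bounded K kap (2 * K) (2 * (Fexp l * kap))) as [B HB].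
  destruct (small_Q_window l K (Rmin e1 e2) Hl HK) as (Q0 & HQ0 & Hwin);
    [apply Rmin_glb_lt; lra|].
  pose proof (Rmin_l e1 e2). pose proof (Rmin_r e1 e2).
  exists Q0, (8 * j ^ 2 * Fconst l * Rabs B). split; [exact HQ0|].
  intros Q m1 m2 m3 HQ Hm1 Hm2 Hm3.
  destruct (Hwin Q HQ) as (HQ1 & HQK & Hf & He). set (f := Fscale l K Q) in *.
  pose proof (Fscale_pos l K Q) as Hf0. fold f in Hf0.
  pose proof (window_ratio K Q m1 HK ltac:(lra) Hm1) as Y1.
  pose proof (window_ratio K Q m2 HK ltac:(lra) Hm2) as Y2.
  pose proof (window_ratio K Q m3 HK ltac:(lra) Hm3) as Y3.
  destruct (F_scaled_bounds l K Q m1 Hl HK ltac:(lra) ltac:(lra) Hm1) as [Z1 V1].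
  destruct (F_scaled_bounds l K Q m2 Hl HK ltac:(lra) ltac:(lra) Hm2) as [Z2 V2].
  destruct (F_scaled_bounds l K Q m3 Hl HK ltac:(lra) ltac:(lra) Hm3) as [Z3 V3].
  fold f kap in Z1, Z2, Z3, V1, V2, V3.
  assert (HQf : 0 < Q ^ 3 * f) by (apply Rmult_lt_0_compat; [apply pow_lt|]; lra).
  assert (Hc : 0 < 8 * j ^ 2 * (Q ^ 3 * f)) by (apply Rmult_lt_0_compat; nra).
  assert (0 < Q * f) by nra. assert (0 < / K) by (apply Rinv_0_lt_compat; lra).
  repeat split; try lra.
  - rewrite (Wmu_unscale j l Q f) by lra.
    pose proof (HW (Q * f) _ _ _ _ _ _ ltac:(lra) Y1 Y2 Y3 Z1 Z2 Z3). nra.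
  - rewrite (dWmu_unscale j l Q f), !Rmult_1_r by lra.
    pose proof (HdW (Q * f) _ _ _ _ _ _ _ _ _ ltac:(lra) Y1 Y2 Y3 Z1 Z2 Z3 V1 V2 V3). nra.
  - intros r1 r2 r3 R1 R2 R3.
    rewrite (dWmu_unscale j l Q f) by lra.
    set (P := dWpoly _ _ _ _ _ _ _ _ _ _ _ _ _).
    assert (HP : Rabs P <= Rabs B).
    { eapply Rle_trans; [|apply Rle_abs]. unfold P.
      apply HB; first [apply Rabs_mult_rate; [lra|assumption] | apply Rabs_le; lra]. }
    rewrite Rabs_mult, (Rabs_pos_eq (8 * j ^ 2)) by nra.
    rewrite Rabs_mult, (Rabs_pos_eq (Q ^ 3 * f)) by lra.
    assert (Q ^ 3 * f <= Fconst l * Q).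
    { assert (Q * Q <= 1) by nra. replace (Q ^ 3 * f) with (Q * Q * (Q * f)) by ring. nra. }
    apply Rle_trans with (8 * j ^ 2 * (Fconst l * Q * Rabs B)).
    + apply Rmult_le_compat_l; [nra|]. apply Rmult_le_compat; try apply Rabs_pos; lra.
    + right. ring.
Qed.

Lemma sqrt_bounds_2_6 : 0 < sqrt 2 <= 2 /\ 2 <= sqrt 6.
Proof.
  pose proof (sqrt_sqrt 2 ltac:(lra)). pose proof (sqrt_sqrt 6 ltac:(lra)).
  pose proof (sqrt_pos 2). pose proof (sqrt_pos 6).
  assert (0 < sqrt 2) by (apply sqrt_lt_R0; lra). nra.
Qed.

Lemma Rabs_lin_comb_le a b x y M : Rabs a <= 2 -> Rabs b <= 2 ->
  Rabs x <= M -> Rabs y <= M -> Rabs (a * x + b * y) <= 4 * M.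
Proof.
  intros. eapply Rle_trans; [apply Rabs_triang|]. rewrite !Rabs_mult.
  pose proof (Rabs_pos a). pose proof (Rabs_pos b).
  pose proof (Rabs_pos x). pose proof (Rabs_pos y). nra.
Qed.

Lemma rate_coefs_bounded :
  Rabs (4 / sqrt 6) <= 2 /\ Rabs (- (2 / sqrt 6)) <= 2 /\
  Rabs 0 <= 2 /\ Rabs (sqrt 2) <= 2 /\ Rabs (- sqrt 2) <= 2.
Proof.
  destruct sqrt_bounds_2_6 as [H2 H6].
  rewrite !Rabs_Ropp, Rabs_R0, !Rabs_pos_eq by (try apply Rlt_le, Rdiv_lt_0_compat; lra).
  repeat split; try lra;
    apply Rmult_le_reg_r with (sqrt 6); try lra;
    unfold Rdiv; rewrite Rmult_assoc, Rinv_l by lra; lra.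
Qed.

Lemma log_mu_bounded x y M : Rabs x <= M -> Rabs y <= M ->
  Rabs (4 / sqrt 6 * x) <= 4 * M /\
  Rabs (- (2 / sqrt 6) * x + sqrt 2 * y) <= 4 * M /\
  Rabs (- (2 / sqrt 6) * x - sqrt 2 * y) <= 4 * M.
Proof.
  intros Hx Hy. pose proof rate_coefs_bounded as (A1 & A2 & A3 & A4 & A5).
  replace (4 / sqrt 6 * x) with (4 / sqrt 6 * x + 0 * y) by ring.
  replace (- (2 / sqrt 6) * x - sqrt 2 * y) with (- (2 / sqrt 6) * x + - sqrt 2 * y) by ring.
  repeat split; apply Rabs_lin_comb_le; assumption.
Qed.

Lemma exp_window Q e M : 0 < Q -> Rabs e <= 4 * M ->
  Q / exp (4 * M) <= Q * exp e <= Q * exp (4 * M).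
Proof.
  intros HQ He. apply Rabs_le_between in He.
  unfold Rdiv. rewrite <- exp_Ropp.
  split; apply Rmult_le_compat_l; try lra; apply exp_monotone; lra.
Qed.

Lemma mu_window j t x y M : 0 < j -> Rabs x <= M -> Rabs y <= M ->
  let Q := Qvol j t in let K := exp (4 * M) in
  Q / K <= mu1 j t x y <= Q * K /\ Q / K <= mu2 j t x y <= Q * K /\
  Q / K <= mu3 j t x y <= Q * K.
Proof.
  intros Hj Hx Hy Q K.
  assert (HQ : 0 < Q) by (apply Rdiv_lt_0_compat; [apply exp_pos|lra]).
  destruct (log_mu_bounded x y M Hx Hy) as (E1 & E2 & E3).
  unfold mu1, mu2, mu3. fold Q.
  repeat split; apply exp_window; auto.
Qed.

Definition singular_regime (j l C t x y : R) : Prop :=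
  near_singularity j l t x y /\ W j l t x y < 0 /\ dW_logQ j l t x y <= 0 /\
  Rabs (dW_qp j l t x y) <= C * exp (2 / sqrt 3 * t) /\
  Rabs (dW_qm j l t x y) <= C * exp (2 / sqrt 3 * t).

Lemma singular_regime_eventually j l M : 0 < j -> 0 < l < 1 -> 0 <= M ->
  exists T C, forall t x y, t <= T -> Rabs x <= M -> Rabs y <= M -> singular_regime j l C t x y.
Proof.
  intros Hj Hl HM.
  assert (HK : 1 <= exp (4 * M)) by (pose proof (exp_ineq1_le (4 * M)); lra).
  destruct (Wmu_estimates j l (exp (4 * M)) Hj Hl HK) as (Q0 & D & HQ0 & HW).
  destruct (exp_eventually_small (/ (2 * j)) (2 / sqrt 3) Q0 0) as (T & _ & HT);
    [apply Rdiv_lt_0_compat; [|apply sqrt_lt_R0]; lra | exact HQ0|].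
  exists T, (D / (2 * j)).
  intros t x y Ht Hx Hy.
  assert (HQ : 0 < Qvol j t <= Q0).
  { unfold Qvol. split; [apply Rdiv_lt_0_compat; [apply exp_pos|lra]|].
    unfold Rdiv. rewrite (Rmult_comm (exp _)). apply HT, Ht. }
  destruct (mu_window j t x y M Hj Hx Hy) as (W1 & W2 & W3).
  assert (0 < Qvol j t / exp (4 * M)) by (apply Rdiv_lt_0_compat; [lra|apply exp_pos]).
  destruct (HW _ _ _ _ HQ W1 W2 W3) as (R1 & R2 & R3 & Wneg & Eneg & Grad).
  assert (Hexp : D * Qvol j t = D / (2 * j) * exp (2 / sqrt 3 * t)) by (unfold Qvol; field; lra).
  pose proof rate_coefs_bounded as (A1 & A2 & A3 & A4 & A5).
  unfold singular_regime, near_singularity, dW_logQ, dW_qp, dW_qm.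
  rewrite W_mu, <- Hexp.
  repeat split; try lra; apply Grad; assumption.
Qed.

(** * Escape of the trajectories *)

Lemma dot_perturbation_bounds p1 p2 d1 d2 eta :
  Rabs d1 <= eta -> Rabs d2 <= eta -> 8 * eta ^ 2 <= p1 ^ 2 + p2 ^ 2 ->
  (p1 ^ 2 + p2 ^ 2) / 2 <= p1 * (p1 + d1) + p2 * (p2 + d2) /\
  (p1 + d1) ^ 2 + (p2 + d2) ^ 2 <= 4 * (p1 ^ 2 + p2 ^ 2).
Proof.
  intros H1 H2 Hs.
  pose proof (Rabs_pos d1). pose proof (Rabs_pos d2).
  assert (Q1 : d1 ^ 2 <= eta ^ 2) by (rewrite <- pow2_abs; apply pow_incr; lra).
  assert (Q2 : d2 ^ 2 <= eta ^ 2) by (rewrite <- pow2_abs; apply pow_incr; lra).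
  assert (AMGM : - (p1 * d1 + p2 * d2) <= (p1 ^ 2 + p2 ^ 2) / 4 + (d1 ^ 2 + d2 ^ 2)).
  { pose proof (pow2_ge_0 (p1 / 2 + d1)). pose proof (pow2_ge_0 (p2 / 2 + d2)). nra. }
  split.
  - nra.
  - pose proof (pow2_ge_0 (p1 - d1)). pose proof (pow2_ge_0 (p2 - d2)). nra.
Qed.

Section Escape.

Variables (qp qm pp pm h Gp Gm : R -> R) (T C beta : R).

Hypothesis beta_pos : 0 < beta.
Hypothesis h_pos : forall t, t <= T -> 0 < h t.
Hypothesis h_antitone : forall s t, s <= t <= T -> h t <= h s.
Hypothesis h_le_kinetic : forall t, t <= T -> h t <= / 2 * (pp t ^ 2 + pm t ^ 2).
Hypothesis qp_derive : forall t, t <= T -> is_derive qp t (pp t / (2 * sqrt (h t))).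
Hypothesis qm_derive : forall t, t <= T -> is_derive qm t (pm t / (2 * sqrt (h t))).
Hypothesis pp_derive : forall t, t <= T -> is_derive pp t (- / sqrt (h t) * Gp t).
Hypothesis pm_derive : forall t, t <= T -> is_derive pm t (- / sqrt (h t) * Gm t).
Hypothesis Gp_bound : forall t, t <= T -> Rabs (Gp t) <= C * exp (beta * t).
Hypothesis Gm_bound : forall t, t <= T -> Rabs (Gm t) <= C * exp (beta * t).

Lemma force_bound G t : t <= T -> Rabs G <= C * exp (beta * t) ->
  Rabs (- / sqrt (h t) * G) <= C / sqrt (h T) * exp (beta * t).
Proof.
  intros Ht HG.
  assert (HhT : 0 < sqrt (h T)) by (apply sqrt_lt_R0, h_pos; lra).
  assert (Hh : sqrt (h T) <= sqrt (h t)) by (apply sqrt_le_1_alt, h_antitone; lra).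
  rewrite Rabs_mult, Rabs_Ropp, Rabs_inv, Rabs_pos_eq by lra.
  replace (C / sqrt (h T) * exp (beta * t)) with (/ sqrt (h T) * (C * exp (beta * t)))
    by (field; lra).
  apply Rmult_le_compat; auto using Rabs_pos.
  - left. apply Rinv_0_lt_compat. lra.
  - apply Rinv_le_contravar; lra.
Qed.

Lemma momentum_drift t s : t <= s <= T ->
  Rabs (pp t - pp s) <= C / sqrt (h T) / beta * exp (beta * s) /\
  Rabs (pm t - pm s) <= C / sqrt (h T) / beta * exp (beta * s).
Proof.
  intros Hts. split.
  - apply (increment_le_of_exp_derive_bound pp (fun x => - / sqrt (h x) * Gp x)); try lra.
    + intros x Hx. apply pp_derive. lra.
    + intros x Hx. apply force_bound, Gp_bound; lra.
  - apply (increment_le_of_exp_derive_bound pm (fun x => - / sqrt (h x) * Gm x)); try lra.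
    + intros x Hx. apply pm_derive. lra.
    + intros x Hx. apply force_bound, Gm_bound; lra.
Qed.

Lemma drift_direction : exists s c, s <= T /\ 0 < c /\ forall t, t <= s ->
  c <= pp s * (pp t / (2 * sqrt (h t))) + pm s * (pm t / (2 * sqrt (h t))).
Proof.
  assert (HhT : 0 < h T) by (apply h_pos; lra).
  assert (HsT : 0 < sqrt (h T)) by (apply sqrt_lt_R0; lra).
  destruct (exp_eventually_small (C / sqrt (h T) / beta) beta (sqrt (h T) / 2) T beta_pos)
    as (s & Hs & Heta); [lra|]. specialize (Heta s (Rle_refl s)).
  set (eta := C / sqrt (h T) / beta * exp (beta * s)) in Heta.
  set (S := pp s ^ 2 + pm s ^ 2).
  assert (HS : 2 * h T <= S).
  { pose proof (h_antitone s T ltac:(lra)). pose proof (h_le_kinetic s Hs). unfold S. lra. }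
  assert (Heta8 : 8 * eta ^ 2 <= S).
  { destruct (momentum_drift s s ltac:(lra)) as [E _]. fold eta in E.
    pose proof (Rabs_pos (pp s - pp s)).
    assert (eta ^ 2 <= (sqrt (h T) / 2) ^ 2) by (apply pow_incr; lra).
    replace ((sqrt (h T) / 2) ^ 2) with (sqrt (h T) ^ 2 / 4) in * by field.
    rewrite pow2_sqrt in * by lra. lra. }
  assert (H2S : 0 < sqrt (2 * S)) by (apply sqrt_lt_R0; lra).
  exists s, (S / (4 * sqrt (2 * S))).
  split; [exact Hs|split; [apply Rdiv_lt_0_compat; lra|]].
  intros t Ht.
  destruct (momentum_drift t s ltac:(lra)) as [D1 D2]. fold eta in D1, D2.
  destruct (dot_perturbation_bounds (pp s) (pm s) _ _ eta D1 D2 Heta8) as [Dot Norm].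
  replace (pp s + (pp t - pp s)) with (pp t) in Dot, Norm by ring.
  replace (pm s + (pm t - pm s)) with (pm t) in Dot, Norm by ring.
  fold S in Dot, Norm.
  assert (Hht : 0 < sqrt (h t)) by (apply sqrt_lt_R0, h_pos; lra).
  assert (Hsq : sqrt (h t) <= sqrt (2 * S))
    by (apply sqrt_le_1_alt; pose proof (h_le_kinetic t ltac:(lra)); lra).
  replace (pp s * (pp t / (2 * sqrt (h t))) + pm s * (pm t / (2 * sqrt (h t))))
    with ((pp s * pp t + pm s * pm t) * / (2 * sqrt (h t))) by (field; lra).
  apply Rle_trans with (S / 2 * / (2 * sqrt (h t))).
  - replace (S / (4 * sqrt (2 * S))) with (S / 2 * / (2 * sqrt (2 * S))) by (field; lra).
    apply Rmult_le_compat_l; [lra|]. apply Rinv_le_contravar; lra.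
  - apply Rmult_le_compat_r; [left; apply Rinv_0_lt_compat|]; lra.
Qed.

Theorem trajectory_unbounded M : ~ (forall t, t <= T -> Rabs (qp t) <= M /\ Rabs (qm t) <= M).
Proof.
  intros Hb.
  destruct drift_direction as (s & c & Hs & Hc & Hdir).
  set (g t := pp s * qp t + pm s * qm t).
  set (N := (Rabs (pp s) + Rabs (pm s)) * M).
  assert (Hg : forall t, t <= s -> Rabs (g t) <= N).
  { intros t Ht. destruct (Hb t ltac:(lra)) as [B1 B2]. unfold g, N.
    eapply Rle_trans; [apply Rabs_triang|]. rewrite !Rabs_mult.
    pose proof (Rabs_pos (pp s)). pose proof (Rabs_pos (pm s)). nra. }
  assert (HN : 0 <= N) by (pose proof (Hg s (Rle_refl s)); pose proof (Rabs_pos (g s)); lra).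
  set (t0 := s - (2 * N + 1) / c).
  assert (Hc' : c * (s - t0) = 2 * N + 1) by (unfold t0; field; lra).
  assert (0 < (2 * N + 1) / c) by (apply Rdiv_lt_0_compat; lra).
  assert (Ht0 : t0 <= s) by (unfold t0; lra).
  destruct (MVT_le g (fun t => pp s * (pp t / (2 * sqrt (h t))) + pm s * (pm t / (2 * sqrt (h t))))
    t0 s Ht0) as (xi & Hxi & E).
  { intros x Hx. apply (is_derive_plus (fun t => pp s * qp t) (fun t => pm s * qm t));
    apply is_derive_scal; [apply qp_derive|apply qm_derive]; lra. }
  assert (c * (s - t0) <= (pp s * (pp xi / (2 * sqrt (h xi))) + pm s * (pm xi / (2 * sqrt (h xi))))
    * (s - t0)) by (apply Rmult_le_compat_r; [lra|apply Hdir; lra]).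
  pose proof (proj1 (Rabs_le_between _ _) (Hg s (Rle_refl s))).
  pose proof (proj1 (Rabs_le_between _ _) (Hg t0 Ht0)).
  unfold g in *. lra.
Qed.

End Escape.

Lemma is_derive_energy (pp pm V : R -> R) (t d1 d2 dv : R) :
  is_derive pp t d1 -> is_derive pm t d2 -> is_derive V t dv ->
  is_derive (fun s => / 2 * (pp s ^ 2 + pm s ^ 2) + 2 * V s) t (pp t * d1 + pm t * d2 + 2 * dv).
Proof.
  intros D1 D2 DV.
  pose proof (is_derive_unique _ _ _ D1) as E1. pose proof (is_derive_unique _ _ _ D2) as E2.
  pose proof (is_derive_unique _ _ _ DV) as EV.
  auto_derive.
  - repeat split; eexists; eassumption.
  - change (Derive (fun x => pp x) t) with (Derive pp t).
    change (Derive (fun x => pm x) t) with (Derive pm t).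
    change (Derive (fun x => V x) t) with (Derive V t).
    rewrite E1, E2, EV. field.
Qed.

(* Along the equations of motion the contributions of q^+- and pi_+- to dh/dq0
   cancel, leaving only the explicit q0-dependence of W. *)
Lemma hamiltonian_derive j l (qp qm pp pm : R -> R) t : 0 < l < 1 ->
  let h := fun s => / 2 * (pp s ^ 2 + pm s ^ 2) + 2 * W j l s (qp s) (qm s) in
  0 < h t -> near_singularity j l t (qp t) (qm t) ->
  is_derive qp t (pp t / (2 * sqrt (h t))) -> is_derive qm t (pm t / (2 * sqrt (h t))) ->
  is_derive pp t (- / sqrt (h t) * dW_qp j l t (qp t) (qm t)) ->
  is_derive pm t (- / sqrt (h t) * dW_qm j l t (qp t) (qm t)) ->
  is_derive h t (2 * (2 / sqrt 3) * dW_logQ j l t (qp t) (qm t)).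
Proof.
  intros Hl h Hh Hns Dqp Dqm Dpp Dpm.
  pose proof (is_derive_energy pp pm _ t _ _ _ Dpp Dpm
    (W_derive_along j l qp qm t _ _ Hl Dqp Dqm Hns)) as D.
  assert (0 < sqrt (h t)) by (apply sqrt_lt_R0; lra).
  assert (0 < sqrt 3) by (apply sqrt_lt_R0; lra).
  match type of D with is_derive _ _ ?v =>
    replace (2 * (2 / sqrt 3) * dW_logQ j l t (qp t) (qm t)) with v by (field; lra) end.
  exact D.
Qed.

Lemma Rabs_le_of_norm_le a b M : sqrt (a ^ 2 + b ^ 2) <= M -> Rabs a <= M /\ Rabs b <= M.
Proof.
  intros H.
  assert (Hs : Rabs (sqrt (a ^ 2 + b ^ 2)) = sqrt (a ^ 2 + b ^ 2))
    by (apply Rabs_pos_eq, sqrt_pos).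
  destruct (triangle_rectangle_le a b (sqrt (a ^ 2 + b ^ 2))) as [Ha Hb].
  - rewrite Rsqr_sqrt by nra. unfold Rsqr. lra.
  - rewrite Hs in Ha, Hb. lra.
Qed.

Lemma bianchi_trajectory_unbounded j l (qp qm pp pm : R -> R) T C M : 0 < l < 1 ->
  let h := fun t => / 2 * (pp t ^ 2 + pm t ^ 2) + 2 * W j l t (qp t) (qm t) in
  (forall t, t <= T -> 0 < h t) ->
  (forall t, t <= T ->
     is_derive qp t (pp t / (2 * sqrt (h t))) /\
     is_derive qm t (pm t / (2 * sqrt (h t))) /\
     is_derive pp t (- (/ sqrt (h t)) * Derive (fun x => W j l t x (qm t)) (qp t)) /\
     is_derive pm t (- (/ sqrt (h t)) * Derive (fun y => W j l t (qp t) y) (qm t))) ->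
  (forall t, t <= T -> singular_regime j l C t (qp t) (qm t)) ->
  ~ (forall t, t <= T -> Rabs (qp t) <= M /\ Rabs (qm t) <= M).
Proof.
  intros Hl h Hh Hd Hreg.
  assert (Eqs : forall t, t <= T ->
    is_derive qp t (pp t / (2 * sqrt (h t))) /\ is_derive qm t (pm t / (2 * sqrt (h t))) /\
    is_derive pp t (- / sqrt (h t) * dW_qp j l t (qp t) (qm t)) /\
    is_derive pm t (- / sqrt (h t) * dW_qm j l t (qp t) (qm t))).
  { intros t Ht. destruct (Hreg t Ht) as [Hns _]. destruct (Hd t Ht) as (D1 & D2 & D3 & D4).
    rewrite (is_derive_unique _ _ _ (W_derive_qp j l t (qp t) (qm t) Hl Hns)) in D3.
    rewrite (is_derive_unique _ _ _ (W_derive_qm j l t (qp t) (qm t) Hl Hns)) in D4.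
    auto. }
  assert (Hbeta : 0 < 2 / sqrt 3) by (apply Rdiv_lt_0_compat; [|apply sqrt_lt_R0]; lra).
  apply (trajectory_unbounded qp qm pp pm h (fun t => dW_qp j l t (qp t) (qm t))
    (fun t => dW_qm j l t (qp t) (qm t)) T C (2 / sqrt 3)); auto.
  - intros s t Hst.
    apply (derive_nonpos_antitone h (fun t => 2 * (2 / sqrt 3) * dW_logQ j l t (qp t) (qm t)));
      [lra| |].
    + intros x Hx. destruct (Hreg x ltac:(lra)) as [Hns _].
      destruct (Eqs x ltac:(lra)) as (D1 & D2 & D3 & D4).
      apply hamiltonian_derive; auto. apply Hh. lra.
    + intros x Hx. destruct (Hreg x ltac:(lra)) as (_ & _ & HE & _). nra.
  - intros t Ht. destruct (Hreg t Ht) as (_ & HW & _). unfold h. lra.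
  - intros t Ht. apply Eqs, Ht.
  - intros t Ht. apply Eqs, Ht.
  - intros t Ht. apply Eqs, Ht.
  - intros t Ht. apply Eqs, Ht.
  - intros t Ht. apply Hreg, Ht.
  - intros t Ht. apply Hreg, Ht.
Qed.

Theorem proposition1 (n : nat) (l q01 : R)
  (qp qm pp pm : R -> R) :
  (1 <= n)%nat -> 0 < l < 1 ->
  let j := INR n / 2 in
  let h := fun t => / 2 * (pp t ^ 2 + pm t ^ 2) + 2 * W j l t (qp t) (qm t) in
  (forall t, t <= q01 -> 0 < h t) ->
  (forall t, t < q01 ->
     is_derive qp t (pp t / (2 * sqrt (h t))) /\
     is_derive qm t (pm t / (2 * sqrt (h t))) /\
     is_derive pp t (- (/ sqrt (h t)) * Derive (fun x => W j l t x (qm t)) (qp t)) /\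
     is_derive pm t (- (/ sqrt (h t)) * Derive (fun y => W j l t (qp t) y) (qm t))) ->
  ~ (exists q02, q02 <= q01 /\
       exists M, forall t, t <= q02 -> sqrt (qp t ^ 2 + qm t ^ 2) <= M).
Proof.
  intros Hn Hl j h Hh Hd [q02 [Hq02 [M HM]]].
  assert (Hj : 0 < j) by (unfold j; apply le_INR in Hn; simpl in Hn; lra).
  assert (Hb : forall t, t <= q02 -> Rabs (qp t) <= M /\ Rabs (qm t) <= M)
    by (intros t Ht; apply Rabs_le_of_norm_le, HM, Ht).
  assert (HM0 : 0 <= M) by (destruct (Hb q02 (Rle_refl _)); pose proof (Rabs_pos (qp q02)); lra).
  destruct (singular_regime_eventually j l M Hj Hl HM0) as (T0 & C & Hreg).
  set (T := Rmin (q02 - 1) T0).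
  assert (HT : T <= q02 - 1 /\ T <= T0) by (split; [apply Rmin_l|apply Rmin_r]).
  apply (bianchi_trajectory_unbounded j l qp qm pp pm T C M Hl).
  - intros t Ht. apply Hh. lra.
  - intros t Ht. apply Hd. lra.
  - intros t Ht. destruct (Hb t ltac:(lra)). apply Hreg; auto. lra.
  - intros t Ht. apply Hb. lra.
Qed.
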